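(* In $\mathrm U_q(\mathfrak{gl}_3)[[\zeta]]$ one has $$1-C^{(1)}\zeta-C^{(2)}\zeta^2-C^{(3)}\zeta^3=N'_{11}(q^2\zeta)\,N''_{22}(\zeta)\,N'''_{33}(q^{-2}\zeta).$$
   Context: Setting: $\hbar\in\mathbb C$, $q=e^\hbar$, $q^2\neq1$, $\kappa_q=q-q^{-1}$, $[\nu]_q=(q^\nu-q^{-\nu})/\kappa_q$. Let $\mathfrak g=\mathbb CG_1\oplus\mathbb CG_2\oplus\mathbb CG_3$ and define linear forms $\alpha_1,\alpha_2$ on $\mathfrak g$ by $\alpha_1(G_1)=1,\alpha_1(G_2)=-1,\alpha_1(G_3)=0$, $\alpha_2(G_1)=0,\alpha_2(G_2)=1,\alpha_2(G_3)=-1$; put $H_1=G_1-G_2$, $H_2=G_2-G_3$. $\mathrm U_q(\mathfrak{gl}_3)$ is the unital associative $\mathbb C$-algebra generated by $E_1,E_2,F_1,F_2$ and symbols $q^X$, $X\in\mathfrak g$, with relations $q^0=1$, $q^{X_1}q^{X_2}=q^{X_1+X_2}$, $q^XE_iq^{-X}=q^{\alpha_i(X)}E_i$, $q^XF_iq^{-X}=q^{-\alpha_i(X)}F_i$, $[E_i,F_j]=\delta_{ij}(q^{H_i}-q^{-H_i})/\kappa_q$, and for $i\ne j$ the $q$-Serre relations $E_i^2E_j-[2]_qE_iE_jE_i+E_jE_i^2=0$, $F_i^2F_j-[2]_qF_iF_jF_i+F_jF_i^2=0$. For $\nu\in\mathbb C$ one writes $q^{X+\nu}=q^\nu q^X$.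 Further $E_3=E_1E_2-q^{-1}E_2E_1$, $F_3=F_2F_1-qF_1F_2$. Central elements: $C^{(1)}=q^{-2G_1-2}+q^{-2G_2}+q^{-2G_3+2}+\kappa_q^2F_1E_1q^{-G_1-G_2-1}+\kappa_q^2F_2E_2q^{-G_2-G_3+1}+\kappa_q^2F_3E_3q^{-G_1-G_3+1}-\kappa_q^3F_3E_1E_2q^{-G_1-G_3}$, $C^{(2)}=-q^{-2G_1-2G_2-2}-q^{-2G_1-2G_3}-q^{-2G_2-2G_3+2}-\kappa_q^2F_1E_1q^{-G_1-G_2-2G_3+1}-\kappa_q^2F_2E_2q^{-2G_1-G_2-G_3-1}-\kappa_q^2F_3E_3q^{-G_1-2G_2-G_3+1}-\kappa_q^3F_1F_2E_3q^{-G_1-2G_2-G_3+1}$, $C^{(3)}=q^{-2(G_1+G_2+G_3)}$. Matrix entries: in $\mathrm U_q(\mathfrak{gl}_3)[[\zeta]]$ ($\zeta$ a formal variable; series with constant term $1$ are invertible) let $N'_{11}(\zeta)=1-\zeta q^{-2G_1}$, $N'_{22}(\zeta)=1-\zeta q^{-2G_2}$, $N'_{33}(\zeta)=1-\zeta q^{-2G_3}$, $N'_{12}=\kappa_q qF_1q^{-G_1-G_2}$, $N'_{23}=\kappa_q qF_2q^{-G_2-G_3}$, $N'_{13}=\kappa_q qF_3q^{-G_1-G_3}$, $N'_{21}=\kappa_qE_1$, $N'_{32}=\kappa_qE_2$, $N'_{31}=\kappa_qE_3$; and $N''_{22}(\zeta)=N'_{22}(\zeta)-\zeta N'_{21}N'_{11}(\zeta)^{-1}N'_{12}$,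 $N''_{23}(\zeta)=N'_{23}-N'_{21}N'_{11}(\zeta)^{-1}N'_{13}$, $N''_{32}(\zeta)=N'_{32}-\zeta N'_{31}N'_{11}(\zeta)^{-1}N'_{12}$, $N''_{33}(\zeta)=N'_{33}(\zeta)-\zeta N'_{31}N'_{11}(\zeta)^{-1}N'_{13}$, $N'''_{33}(\zeta)=N''_{33}(\zeta)-\zeta N''_{32}(\zeta)N''_{22}(\zeta)^{-1}N''_{23}(\zeta)$. For $c\in\mathbb C$, $N(c\zeta)$ denotes substitution $\zeta\mapsto c\zeta$. *)

From HB Require Import structures.
From mathcomp Require Import all_boot all_order all_algebra.
Set Implicit Arguments. Unset Strict Implicit. Unset Printing Implicit Defensive.
Import Order.TTheory GRing.Theory Num.Theory.
Local Open Scope ring_scope.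

Definition series (A : Type) := nat -> A.

Section Series.
Variable (K : fieldType) (A : algType K).

Definition pC (a : A) : series A := fun n => if n is 0%N then a else 0.
Definition pX (a : A) : series A := fun n => if n is 1%N then a else 0.
Definition pzeta : series A := pX 1.
Definition padd (f g : series A) : series A := fun n => f n + g n.
Definition psub (f g : series A) : series A := fun n => f n - g n.
Definition pmul (f g : series A) : series A :=
  fun n => \sum_(i < n.+1) f i * g (n - i)%N.
Definition ppow (f : series A) (k : nat) : series A := iter k (pmul f) (pC 1).
(* inverse of a series with constant term 1 (Neumann series):
   f^{-1} = sum_k (1 - f)^k, well defined since 1 - f has no constant term *)
Definition pinv (f : series A) : series A :=
  fun n => \sum_(k < n.+1) ppow (psub (pC 1) f) k n.
Definition psubst (c : K) (f : series A) : series A := fun n => c ^+ n *: f n.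
End Series.
Arguments pzeta {K A}.

(* Tq x1 x2 x3 stands for the symbol q^X with X = x1 G1 + x2 G2 + x3 G3.
   qp nu stands for the scalar q^nu = e^(hbar nu). *)
Record UqGens (K : fieldType) (A : algType K) := {
  E1 : A; E2 : A; F1 : A; F2 : A; Tq : K -> K -> K -> A }.

Section Uq.
Variables (K : fieldType) (qp : K -> K) (A : algType K) (g : UqGens A).

Definition qq : K := qp 1.
Definition kappa : K := qp 1 - qp (-1).
Definition qint2 : K := (qp 2 - qp (-2)) / kappa.

Local Notation E1 := (E1 g). Local Notation E2 := (E2 g).
Local Notation F1 := (F1 g). Local Notation F2 := (F2 g).
Local Notation T := (Tq g).

Definition Uq_relations : Prop :=
  [/\ T 0 0 0 = 1,
      (forall a b c a' b' c',
          T a b c * T a' b' c' = T (a + a') (b + b') (c + c')),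
    [/\ (forall a b c, T a b c * E1 * T (- a) (- b) (- c) = qp (a - b) *: E1),
      (forall a b c, T a b c * E2 * T (- a) (- b) (- c) = qp (b - c) *: E2),
      (forall a b c, T a b c * F1 * T (- a) (- b) (- c) = qp (- (a - b)) *: F1) &
      (forall a b c, T a b c * F2 * T (- a) (- b) (- c) = qp (- (b - c)) *: F2)],
      [/\ E1 * F1 - F1 * E1 = kappa^-1 *: (T 1 (-1) 0 - T (-1) 1 0),
          E2 * F2 - F2 * E2 = kappa^-1 *: (T 0 1 (-1) - T 0 (-1) 1),
          E1 * F2 - F2 * E1 = 0 &
          E2 * F1 - F1 * E2 = 0] &
      [/\ E1 * E1 * E2 - qint2 *: (E1 * E2 * E1) + E2 * E1 * E1 = 0,
          E2 * E2 * E1 - qint2 *: (E2 * E1 * E2) + E1 * E2 * E2 = 0,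
          F1 * F1 * F2 - qint2 *: (F1 * F2 * F1) + F2 * F1 * F1 = 0 &
          F2 * F2 * F1 - qint2 *: (F2 * F1 * F2) + F1 * F2 * F2 = 0]].

Definition E3 : A := E1 * E2 - qp (-1) *: (E2 * E1).
Definition F3 : A := F2 * F1 - qp 1 *: (F1 * F2).

Definition C1 : A :=
  qp (-2) *: T (-2) 0 0 + T 0 (-2) 0 + qp 2 *: T 0 0 (-2)
  + (kappa ^+ 2 * qp (-1)) *: (F1 * E1 * T (-1) (-1) 0)
  + (kappa ^+ 2 * qp 1) *: (F2 * E2 * T 0 (-1) (-1))
  + (kappa ^+ 2 * qp 1) *: (F3 * E3 * T (-1) 0 (-1))
  - kappa ^+ 3 *: (F3 * E1 * E2 * T (-1) 0 (-1)).

Definition C2 : A :=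
  - (qp (-2) *: T (-2) (-2) 0) - T (-2) 0 (-2) - qp 2 *: T 0 (-2) (-2)
  - (kappa ^+ 2 * qp 1) *: (F1 * E1 * T (-1) (-1) (-2))
  - (kappa ^+ 2 * qp (-1)) *: (F2 * E2 * T (-2) (-1) (-1))
  - (kappa ^+ 2 * qp 1) *: (F3 * E3 * T (-1) (-2) (-1))
  - (kappa ^+ 3 * qp 1) *: (F1 * F2 * E3 * T (-1) (-2) (-1)).

Definition C3 : A := T (-2) (-2) (-2).

Definition N'11 : series A := psub (pC 1) (pX (T (-2) 0 0)).
Definition N'22 : series A := psub (pC 1) (pX (T 0 (-2) 0)).
Definition N'33 : series A := psub (pC 1) (pX (T 0 0 (-2))).
Definition N'12 : series A := pC ((kappa * qp 1) *: (F1 * T (-1) (-1) 0)).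
Definition N'23 : series A := pC ((kappa * qp 1) *: (F2 * T 0 (-1) (-1))).
Definition N'13 : series A := pC ((kappa * qp 1) *: (F3 * T (-1) 0 (-1))).
Definition N'21 : series A := pC (kappa *: E1).
Definition N'32 : series A := pC (kappa *: E2).
Definition N'31 : series A := pC (kappa *: E3).

Definition N''22 : series A :=
  psub N'22 (pmul pzeta (pmul N'21 (pmul (pinv N'11) N'12))).
Definition N''23 : series A :=
  psub N'23 (pmul N'21 (pmul (pinv N'11) N'13)).
Definition N''32 : series A :=
  psub N'32 (pmul pzeta (pmul N'31 (pmul (pinv N'11) N'12))).
Definition N''33 : series A :=
  psub N'33 (pmul pzeta (pmul N'31 (pmul (pinv N'11) N'13))).
Definition N'''33 : series A :=
  psub N''33 (pmul pzeta (pmul N''32 (pmul (pinv N''22) N''23))).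

Definition charpoly : series A :=
  fun n => match n with
           | 0 => 1 | 1 => - C1 | 2 => - C2 | 3 => - C3 | _ => 0 end.
End Uq.

(* Write a = N'11, "up"/"down" for zeta |-> q^(+-2) zeta and P for the quantum
   2x2 minor a(q^2 zeta) N'22 - zeta N'21 N'12.  Since E1 and E3 are
   q-commuted by q^(-2 G1), a(q^2 zeta) N''22 = P, and the downshifted entries
   of the later elimination steps are a^-1 times explicit polynomials. *)

From Stdlib Require Import FunctionalExtensionality.
From HB Require Import structures.
From mathcomp Require Import all_boot all_order all_algebra.
From mathcomp Require Import zify.
Import GRing.Theory.
Local Open Scope ring_scope.
Set Implicit Arguments. Unset Strict Implicit.

Local Notation "f *s g" := (pmul f g) (at level 40, left associativity).

(* 1. Formal power series *)

Section Series.
Variables (K : fieldType) (A : algType K).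
Implicit Types (f g h : series A).

Lemma series_ext f g : (forall n, f n = g n) -> f = g.
Proof. exact: functional_extensionality. Qed.

Lemma pmul_rev f g n : (f *s g) n = \sum_(j < n.+1) f (n - j)%N * g j.
Proof.
rewrite /pmul (reindex_inj rev_ord_inj) /=.
by apply: eq_bigr => j _; rewrite subKn // -ltnS.
Qed.

Lemma pmul0 f g : (f *s g) 0%N = f 0%N * g 0%N.
Proof. by rewrite /pmul big_ord_recl big_ord0 addr0. Qed.

Lemma pmulA f g h : f *s (g *s h) = f *s g *s h.
Proof.
apply: series_ext => i; rewrite [LHS]/pmul [RHS]pmul_rev.
pose t j k := f j * (g (i - j - k)%N * h k).
transitivity (\sum_(j < i.+1) \sum_(k < i.+1 | (k <= i - j)%N) t j k).
  apply: eq_bigr => /= j _; rewrite pmul_rev big_distrr /=.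
  by rewrite (big_ord_narrow_leq (leq_subr _ _)).
rewrite (exchange_big_dep predT) //=; apply: eq_bigr => k _.
transitivity (\sum_(j < i.+1 | (j <= i - k)%N) t j k).
  by apply: eq_bigl => j; apply/idP/idP; have := ltn_ord j; have := ltn_ord k; lia.
rewrite (big_ord_narrow_leq (leq_subr _ _)) [pmul f g _]/pmul big_distrl /=.
by apply: eq_bigr => j _; rewrite /t -!subnDA addnC mulrA.
Qed.

Lemma pmulDr f g h : h *s padd f g = padd (h *s f) (h *s g).
Proof.
apply: series_ext => n; rewrite /pmul /padd -big_split /=.
by apply: eq_bigr => i _; rewrite mulrDr.
Qed.

Lemma pmulBl f g h : psub f g *s h = psub (f *s h) (g *s h).
Proof.
apply: series_ext => n; rewrite /pmul /psub -sumrB /=.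
by apply: eq_bigr => i _; rewrite mulrBl.
Qed.

Lemma pmulBr f g h : h *s psub f g = psub (h *s f) (h *s g).
Proof.
apply: series_ext => n; rewrite /pmul /psub -sumrB /=.
by apply: eq_bigr => i _; rewrite mulrBr.
Qed.

Lemma pmul1l f : pC 1 *s f = f.
Proof.
apply: series_ext => n; rewrite /pmul big_ord_recl /= subn0 mul1r big1 ?addr0 //.
by move=> i _; rewrite mul0r.
Qed.

Lemma pmul1r f : f *s pC 1 = f.
Proof.
apply: series_ext => n; rewrite pmul_rev big_ord_recl /= subn0 mulr1 big1 ?addr0 //.
by move=> i _; rewrite mulr0.
Qed.

Lemma psubKr f g : psub f (psub f g) = g.
Proof. by apply: series_ext => n; rewrite /psub opprB addrC subrK. Qed.

Lemma psubBA f g h : psub (psub f g) h = psub f (padd g h).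
Proof. by apply: series_ext => n; rewrite /psub /padd opprD addrA. Qed.

Lemma ppow_low f k n : f 0%N = 0 -> (n < k)%N -> ppow f k n = 0.
Proof.
move=> f0; elim: k n => [|k IH] n //= lt.
rewrite /pmul big_ord_recl /= f0 mul0r add0r big1 // => i _.
by rewrite IH ?mulr0 //; have := ltn_ord i; rewrite /bump /=; lia.
Qed.

Lemma pinv0 f : pinv f 0%N = 1.
Proof. by rewrite /pinv big_ord_recl big_ord0 addr0. Qed.

(* pinv f is the geometric series of g = 1 - f, hence g pinv f = pinv f - 1 *)
Lemma pinv_geometric f : f 0%N = 1 ->
  psub (pC 1) f *s pinv f = psub (pinv f) (pC 1).
Proof.
move=> f0; set g := psub (pC 1) f.
have g0 : g 0%N = 0 by rewrite /g /psub /= f0 subrr.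
apply: series_ext => n; rewrite /pmul.
transitivity (\sum_(i < n.+1) \sum_(k < n.+1) g i * ppow g k (n - i)%N).
  apply: eq_bigr => i _; rewrite /pinv big_distrr /=.
  rewrite (big_ord_widen n.+1 (fun k => g i * ppow g k (n - i)%N)) ?ltnS ?leq_subr //.
  rewrite [RHS](bigID (fun k : 'I_n.+1 => k < (n - i).+1)%N) /=.
  rewrite [X in _ = _ + X]big1 ?addr0 // => k; rewrite -leqNgt => lt.
  by rewrite ppow_low ?mulr0.
rewrite exchange_big /= -/g.
transitivity (\sum_(k < n.+1) ppow g k.+1 n); first exact: eq_bigr.
rewrite big_ord_recr ppow_low // /= addr0 /pinv /psub [in RHS]big_ord_recl /=.
by rewrite addrAC subrr add0r.
Qed.

Lemma pinv_r f : f 0%N = 1 -> f *s pinv f = pC 1.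
Proof.
move=> f0; rewrite -{1}[f](psubKr (pC 1)) pmulBl pmul1l pinv_geometric //.
by rewrite psubKr.
Qed.

Lemma pinv_l f : f 0%N = 1 -> pinv f *s f = pC 1.
Proof.
move=> f0; have ff : pinv (pinv f) = f.
  by rewrite -[LHS]pmul1l -(pinv_r f0) -pmulA (pinv_r (pinv0 f)) pmul1r.
by rewrite -{2}ff (pinv_r (pinv0 f)).
Qed.

Lemma pinv_unique f h : f 0%N = 1 -> h *s f = pC 1 -> h = pinv f.
Proof. by move=> f0 e; rewrite -[h]pmul1r -(pinv_r f0) pmulA e pmul1l. Qed.

Lemma pinv_mul f g : f 0%N = 1 -> g 0%N = 1 -> pinv (f *s g) = pinv g *s pinv f.
Proof.
move=> f0 g0; symmetry; apply: pinv_unique; first by rewrite pmul0 f0 g0 mulr1.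
by rewrite -pmulA [pinv f *s _]pmulA pinv_l // pmul1l pinv_l.
Qed.

Lemma pinvK f : f 0%N = 1 -> pinv (pinv f) = f.
Proof. by move=> f0; symmetry; apply: pinv_unique; [exact: pinv0 | exact: pinv_r]. Qed.

Lemma pinv_commute f h y : f 0%N = 1 -> h 0%N = 1 -> f *s y = y *s h ->
  y *s pinv h = pinv f *s y.
Proof.
move=> f0 h0 e.
rewrite -[RHS]pmul1r -(pinv_r h0) pmulA -[pinv f *s y *s h]pmulA -e.
by rewrite pmulA pinv_l // pmul1l.
Qed.

Lemma psubst_mul c f g : psubst c (f *s g) = psubst c f *s psubst c g.
Proof.
apply: series_ext => n; rewrite /psubst /pmul scaler_sumr; apply: eq_bigr => i _.
by rewrite -scalerAl -scalerAr !scalerA -exprD subnKC // -ltnS.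
Qed.

Lemma psubst_sub c f g : psubst c (psub f g) = psub (psubst c f) (psubst c g).
Proof. by apply: series_ext => n; rewrite /psubst /psub scalerBr. Qed.

Lemma psubst_C c (a : A) : psubst c (pC a) = pC a.
Proof. by apply: series_ext => -[|n]; rewrite /psubst /= ?expr0 ?scale1r ?scaler0. Qed.

Lemma psubst0 c f : psubst c f 0%N = f 0%N.
Proof. by rewrite /psubst expr0 scale1r. Qed.

Lemma psubst_comp c d f : psubst c (psubst d f) = psubst (c * d) f.
Proof. by apply: series_ext => n; rewrite /psubst scalerA exprMn. Qed.

Lemma psubst1 f : psubst 1 f = f.
Proof. by apply: series_ext => n; rewrite /psubst expr1n scale1r. Qed.

Lemma psubst_inv c f : f 0%N = 1 -> psubst c (pinv f) = pinv (psubst c f).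
Proof.
move=> f0; apply: pinv_unique; first by rewrite psubst0.
by rewrite -psubst_mul pinv_l // psubst_C.
Qed.

Lemma pmulXl (b : A) f n : (pX b *s f) n.+1 = b * f n.
Proof.
rewrite /pmul big_ord_recl /= mul0r add0r big_ord_recl /= subSS subn0 big1 ?addr0 //.
by move=> i _; rewrite /bump /= mul0r.
Qed.

Lemma pmulXr (b : A) f n : (f *s pX b) n.+1 = f n * b.
Proof.
rewrite pmul_rev big_ord_recl /= mulr0 add0r big_ord_recl /= subSS subn0 big1 ?addr0 //.
by move=> i _; rewrite /bump /= mulr0.
Qed.

Lemma pX_central (b : A) f : (forall x, b * x = x * b) -> pX b *s f = f *s pX b.
Proof.
move=> bC; apply: series_ext => -[|n]; last by rewrite pmulXl pmulXr bC.
by rewrite !pmul0 /= mul0r mulr0.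
Qed.

Lemma psubst_X c (b : A) : psubst c (pX b) = pX (c *: b).
Proof. by apply: series_ext => -[|[|n]]; rewrite /psubst /= ?scaler0 ?expr1. Qed.

Lemma psubst_zeta_central c f : psubst c pzeta *s f = f *s psubst c pzeta.
Proof. by rewrite psubst_X; apply: pX_central => x; rewrite -scalerAl -scalerAr mul1r mulr1. Qed.

Lemma pzeta_central f : pzeta *s f = f *s pzeta.
Proof. by rewrite -(psubst1 pzeta) psubst_zeta_central. Qed.

Definition ps (l : seq A) : series A := fun n => nth 0 l n.

Fixpoint cl_add (l1 l2 : seq A) : seq A :=
  match l1, l2 with
  | x :: l1', y :: l2' => (x + y) :: cl_add l1' l2'
  | [::], _ => l2
  | _, [::] => l1 end.
Definition cl_opp (l : seq A) : seq A := [seq - x | x <- l].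
Fixpoint cl_mul (l1 l2 : seq A) : seq A :=
  if l1 is x :: l1' then cl_add [seq x * y | y <- l2] (0 :: cl_mul l1' l2) else [::].
Fixpoint cl_subst (c : K) (l : seq A) : seq A :=
  if l is x :: l' then x :: [seq c *: y | y <- cl_subst c l'] else [::].

Lemma nth_map0 (h : A -> A) l n : h 0 = 0 -> nth 0 [seq h x | x <- l] n = h (nth 0 l n).
Proof. by move=> h0; elim: l n => [|x l IH] [|n] //=. Qed.

Lemma padd_ps l1 l2 : padd (ps l1) (ps l2) = ps (cl_add l1 l2).
Proof.
apply: series_ext => n; rewrite /padd /ps.
by elim: l1 l2 n => [|x l1 IH] [|y l2] [|n] //=; rewrite ?nth_nil ?addr0 ?add0r.
Qed.

Lemma psub_ps l1 l2 : psub (ps l1) (ps l2) = ps (cl_add l1 (cl_opp l2)).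
Proof.
rewrite -padd_ps; apply: series_ext => n.
by rewrite /psub /padd /ps nth_map0 ?oppr0.
Qed.

Lemma pmul_ps l1 l2 : ps l1 *s ps l2 = ps (cl_mul l1 l2).
Proof.
apply: series_ext => n; rewrite /pmul /ps.
elim: l1 n => [|x l1 IH] n /=.
  by rewrite nth_nil big1 // => i _; rewrite nth_nil mul0r.
rewrite -/(ps _ n) -padd_ps /padd /ps nth_map0 ?mulr0 // big_ord_recl /= subn0.
congr (_ + _); case: n => [|n] /=; first by rewrite big_ord0.
by rewrite -IH; apply: eq_bigr => i _.
Qed.

Lemma psubst_ps c l : psubst c (ps l) = ps (cl_subst c l).
Proof.
apply: series_ext => n; rewrite /psubst /ps.
elim: l n => [|x l IH] [|n] /=; rewrite ?scaler0 ?expr0 ?scale1r //.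
by rewrite nth_map0 ?scaler0 // -IH scalerA -exprS.
Qed.

Lemma pC_ps (a : A) : pC a = ps [:: a].
Proof. by apply: series_ext => -[|[|n]]. Qed.

Lemma pX_ps (a : A) : pX a = ps [:: 0; a].
Proof. by apply: series_ext => -[|[|[|n]]]. Qed.

Lemma ps_cons x y l1 l2 : x = y -> ps l1 = ps l2 -> ps (x :: l1) = ps (y :: l2).
Proof. by move=> -> e; apply: series_ext => -[|n] //; rewrite /ps /= -/(ps l1 n) e. Qed.

Lemma ps_nil_cons y l : 0 = y -> ps [::] = ps l -> ps [::] = ps (y :: l).
Proof. by move=> <- e; apply: series_ext => -[|n] //; rewrite /ps /= -/(ps l n) -e /ps !nth_nil. Qed.

Lemma ps_cons_nil x l : x = 0 -> ps l = ps [::] -> ps (x :: l) = ps [::].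
Proof. by move=> x0 e; symmetry; apply: ps_nil_cons; rewrite ?x0. Qed.
End Series.

Section QNumbers.
Variables (K : fieldType) (qp : K -> K).
Hypothesis qp0 : qp 0 = 1.
Hypothesis qpD : forall a b, qp (a + b) = qp a * qp b.

Lemma qpNK a : qp (- a) * qp a = 1.
Proof. by rewrite -qpD addNr qp0. Qed.

Lemma kappa_neq0 : qp 1 ^+ 2 != 1 -> kappa qp != 0.
Proof.
apply: contra => /eqP; rewrite /kappa => /subr0_eq e.
by rewrite expr2 {2}e mulrC qpNK.
Qed.

Lemma qint2E : kappa qp != 0 -> qint2 qp = qp 1 + qp (-1).
Proof.
move=> k0; apply: (mulIf k0); rewrite /qint2 divfK // /kappa.
have -> : qp 2 = qp 1 * qp 1 by rewrite -qpD.
have -> : qp (-2) = qp (-1) * qp (-1) by rewrite -qpD -opprD.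
by rewrite mulrDl !mulrBr [qp (-1) * qp 1]mulrC addrA subrK.
Qed.
End QNumbers.

Section Weights.
Variables (K : fieldType) (qp : K -> K) (A : algType K) (g : UqGens A).
Hypothesis HR : Uq_relations qp g.
Local Notation T := (Tq g).

Lemma T0 : T 0 0 0 = 1. Proof. by case: HR. Qed.

Lemma TM a b c a' b' c' : T a b c * T a' b' c' = T (a + a') (b + b') (c + c').
Proof. by case: HR. Qed.

Lemma TNK a b c : T (- a) (- b) (- c) * T a b c = 1.
Proof. by rewrite TM !addNr T0. Qed.

Lemma TKN a b c : T a b c * T (- a) (- b) (- c) = 1.
Proof. by rewrite TM !subrr T0. Qed.

Definition weight_vector (y : A) (w : K -> K -> K -> K) :=
  forall a b c, T a b c * y * T (- a) (- b) (- c) = qp (w a b c) *: y.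

Lemma T_commute y w : weight_vector y w ->
  forall a b c, T a b c * y = qp (w a b c) *: (y * T a b c).
Proof. by move=> hy a b c; rewrite -[LHS]mulr1 -(TNK a b c) mulrA hy scalerAl. Qed.

Lemma commute_T y w : weight_vector y w ->
  forall a b c, y * T a b c = qp (w (- a) (- b) (- c)) *: (T a b c * y).
Proof.
move=> hy a b c; have := hy (- a) (- b) (- c); rewrite !opprK => h.
by rewrite -[LHS]mul1r -(TKN a b c) -!mulrA [_ * (y * _)]mulrA h scalerAr.
Qed.

Lemma weight_E1 : weight_vector (E1 g) (fun a b _ => a - b).
Proof. by case: HR => _ _ [h _ _ _] _ _. Qed.
Lemma weight_E2 : weight_vector (E2 g) (fun _ b c => b - c).
Proof. by case: HR => _ _ [_ h _ _] _ _. Qed.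
Lemma weight_F1 : weight_vector (F1 g) (fun a b _ => - (a - b)).
Proof. by case: HR => _ _ [_ _ h _] _ _. Qed.
Lemma weight_F2 : weight_vector (F2 g) (fun _ b c => - (b - c)).
Proof. by case: HR => _ _ [_ _ _ h] _ _. Qed.
End Weights.

(* 3. A verified normaliser for U_q(gl_3) *)

(* Laurent polynomials in q with integer coefficients, as lists of
   (exponent, coefficient) pairs. *)
Definition laur := seq (int * int).

Definition lmul (l1 l2 : laur) : laur :=
  [seq (m1.1 + m2.1, m1.2 * m2.2) | m1 <- l1, m2 <- l2].
Definition lopp (l : laur) : laur := [seq (m.1, - m.2) | m <- l].
Fixpoint lins (m : int * int) (l : laur) : laur :=
  if l is m' :: l' then
    if m.1 == m'.1 then (m.1, m.2 + m'.2) :: l' else m' :: lins m l'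
  else [:: m].
Definition lnorm (l : laur) : laur := [seq m <- foldr lins [::] l | m.2 != 0].
Definition lkpow (n : nat) : laur := iter n (lmul [:: (1, 1); (-1, -1)]) [:: (0, 1)].

(* The scalars of the normaliser, Z[q, q^-1, kappa^-1]: a pair (k, l) stands
   for l / kappa^k.  Sums are taken over a common denominator, so that a
   scalar vanishes as soon as its normalised numerator does. *)
Definition coef := (nat * laur)%type.
Definition cq (e : int) : coef := (0%N, [:: (e, 1)]).
Definition cone : coef := cq 0.
Definition ckinv : coef := (1%N, [:: (0, 1)]).
Definition cqint2 : coef := (0%N, [:: (1, 1); (-1, 1)]).
Definition cmul (c1 c2 : coef) : coef := ((c1.1 + c2.1)%N, lmul c1.2 c2.2).
Definition copp (c : coef) : coef := (c.1, lopp c.2).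
Definition cadd (c1 c2 : coef) : coef :=
  let m := maxn c1.1 c2.1 in
  (m, lnorm (lmul (lkpow (m - c1.1)) c1.2 ++ lmul (lkpow (m - c2.1)) c2.2)).
Definition cnorm (c : coef) : coef := (c.1, lnorm c.2).

Section Scalars.
Variables (K : fieldType) (qp : K -> K).
Hypothesis qp0 : qp 0 = 1.
Hypothesis qpD : forall a b, qp (a + b) = qp a * qp b.
Hypothesis kappa_neq0 : kappa qp != 0.

Definition ilaur (l : laur) : K := \sum_(m <- l) m.2%:~R * qp m.1%:~R.
Definition icoef (c : coef) : K := ilaur c.2 / kappa qp ^+ c.1.

Lemma ilaur_cat l1 l2 : ilaur (l1 ++ l2) = ilaur l1 + ilaur l2.
Proof. exact: big_cat. Qed.

Lemma ilaur_mul l1 l2 : ilaur (lmul l1 l2) = ilaur l1 * ilaur l2.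
Proof.
rewrite /ilaur big_allpairs_dep mulr_suml; apply: eq_bigr => m1 _.
rewrite mulr_sumr; apply: eq_bigr => m2 _ /=.
by rewrite intrD intrM qpD mulrACA.
Qed.

Lemma ilaur_opp l : ilaur (lopp l) = - ilaur l.
Proof. by rewrite /ilaur big_map -sumrN; apply: eq_bigr => m _; rewrite intrN mulNr. Qed.

Lemma ilaur_lins m l : ilaur (lins m l) = ilaur [:: m] + ilaur l.
Proof.
rewrite /ilaur big_seq1; elim: l => [|m' l IH] /=; first by rewrite big_nil addr0 big_seq1.
case: eqP => [e|_]; rewrite !big_cons /=; last by rewrite IH addrCA.
by rewrite intrD mulrDl -e addrA.
Qed.

Lemma ilaur_norm l : ilaur (lnorm l) = ilaur l.
Proof.
rewrite /lnorm /ilaur big_filter big_mkcond /=.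
transitivity (ilaur (foldr lins [::] l)).
  by apply: eq_bigr => m _; case: eqP => // ->; rewrite mul0r.
elim: l => [|m l IH] /=; first by rewrite /ilaur big_nil.
by rewrite ilaur_lins IH /ilaur big_cons big_seq1.
Qed.

Lemma ilaur_kpow n : ilaur (lkpow n) = kappa qp ^+ n.
Proof.
elim: n => [|n IH]; first by rewrite /ilaur big_seq1 qp0 mulr1.
rewrite /lkpow iterS -/(lkpow n) ilaur_mul IH exprS; congr (_ * _).
by rewrite /ilaur !big_cons big_nil /kappa addr0 mul1r mulN1r.
Qed.

Lemma icoef_cq e : icoef (cq e) = qp e%:~R.
Proof. by rewrite /icoef /ilaur big_seq1 expr0 divr1 mul1r. Qed.

Lemma icoef_one : icoef cone = 1.
Proof. by rewrite icoef_cq qp0. Qed.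

Lemma icoef_kinv : icoef ckinv = (kappa qp)^-1.
Proof. by rewrite /icoef /ilaur big_seq1 qp0 mulr1 expr1 mul1r. Qed.

Lemma icoef_qint2 : icoef cqint2 = qint2 qp.
Proof. by rewrite qint2E // /icoef /ilaur !big_cons big_nil !mul1r addr0 expr0 divr1. Qed.

Lemma icoef_mul c1 c2 : icoef (cmul c1 c2) = icoef c1 * icoef c2.
Proof. by rewrite /icoef ilaur_mul exprD invfM mulrACA. Qed.

Lemma icoef_opp c : icoef (copp c) = - icoef c.
Proof. by rewrite /icoef ilaur_opp mulNr. Qed.

Lemma icoef_norm c : icoef (cnorm c) = icoef c.
Proof. by rewrite /icoef ilaur_norm. Qed.

Lemma icoef_add c1 c2 : icoef (cadd c1 c2) = icoef c1 + icoef c2.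
Proof.
rewrite /icoef /= ilaur_norm ilaur_cat !ilaur_mul !ilaur_kpow mulrDl.
have shift k : (k <= maxn c1.1 c2.1)%N ->
    kappa qp ^+ (maxn c1.1 c2.1 - k) / kappa qp ^+ maxn c1.1 c2.1 = (kappa qp ^+ k)^-1.
  move=> le; rewrite -{2}(subnK le) exprD invfM mulrA mulfV ?mul1r //.
  exact: expf_neq0.
by rewrite -!mulrA ![ilaur _ * _]mulrC !mulrA !shift ?leq_maxl ?leq_maxr // !mulrC.
Qed.
End Scalars.

(* Letters: the generators E1, E2, F1, F2, the abbreviations E3, F3 and the
   group-like elements q^X with X = a G1 + b G2 + c G3, a, b, c integers. *)
Inductive letter := LE1 | LE2 | LE3 | LF1 | LF2 | LF3 | LT of int & int & int.

Definition letter_code (x : letter) : nat * (int * int * int) :=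
  match x with
  | LE1 => (0%N, (0, 0, 0)) | LE2 => (1%N, (0, 0, 0)) | LE3 => (2%N, (0, 0, 0))
  | LF1 => (3%N, (0, 0, 0)) | LF2 => (4%N, (0, 0, 0)) | LF3 => (5%N, (0, 0, 0))
  | LT a b c => (6%N, (a, b, c)) end.
Definition letter_decode (x : nat * (int * int * int)) : letter :=
  match x with
  | (0, _) => LE1 | (1, _) => LE2 | (2, _) => LE3
  | (3, _) => LF1 | (4, _) => LF2 | (5, _) => LF3
  | (_, (a, b, c)) => LT a b c end%N.
Lemma letter_codeK : cancel letter_code letter_decode. Proof. by case. Qed.

Definition letter_eqb (x y : letter) : bool := letter_code x == letter_code y.
Lemma letter_eqP : Equality.axiom letter_eqb.
Proof. by move=> x y; apply: (iffP eqP) => [/(can_inj letter_codeK)|->]. Qed.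
HB.instance Definition _ := hasDecEq.Build letter letter_eqP.

Definition word := seq letter.
Definition ncpoly := seq (word * coef).

Definition mono (w : word) (c : coef) : ncpoly := [:: (w, c)].
Definition pscale (c : coef) (p : ncpoly) : ncpoly := [seq (t.1, cmul c t.2) | t <- p].
Definition pmulp (p1 p2 : ncpoly) : ncpoly :=
  [seq (t1.1 ++ t2.1, cmul t1.2 t2.2) | t1 <- p1, t2 <- p2].
Fixpoint pins (t : word * coef) (p : ncpoly) : ncpoly :=
  if p is t' :: p' then
    if t.1 == t'.1 then (t.1, cadd t.2 t'.2) :: p' else t' :: pins t p'
  else [:: t].
Definition pnorm (p : ncpoly) : ncpoly :=
  [seq t <- [seq (t.1, cnorm t.2) | t <- foldr pins [::] p] | t.2.2 != [::]].

(* A rewrite rule inspects the head of a word w; when it fires it returns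
   (r, rest) where w = lhs ++ rest and lhs = r holds in U_q(gl_3).  The rules
   move F's to the left of q^X and q^X to the left of E's, expand E3 and F3,
   and orient the q-Serre relations; their normal forms are the words
   F-part q^X E-part of the PBW basis. *)
Definition rule := word -> option (ncpoly * word).

Definition rule_E3 : rule := fun w =>
  if w is LE3 :: r then Some (mono [:: LE1; LE2] cone ++ mono [:: LE2; LE1] (copp (cq (-1))), r)
  else None.
Definition rule_F3 : rule := fun w =>
  if w is LF3 :: r then Some (mono [:: LF2; LF1] cone ++ mono [:: LF1; LF2] (copp (cq 1)), r)
  else None.
Definition rule_TT : rule := fun w =>
  if w is LT a b c :: LT a' b' c' :: r then Some (mono [:: LT (a + a') (b + b') (c + c')] cone, r)
  else None.
Definition rule_T0 : rule := fun w =>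
  if w is LT a b c :: r then
    if [&& a == 0, b == 0 & c == 0] then Some (mono [::] cone, r) else None
  else None.
Definition rule_ET : rule := fun w =>
  match w with
  | LE1 :: LT a b c :: r => Some (mono [:: LT a b c; LE1] (cq (b - a)), r)
  | LE2 :: LT a b c :: r => Some (mono [:: LT a b c; LE2] (cq (c - b)), r)
  | _ => None end.
Definition rule_TF : rule := fun w =>
  match w with
  | LT a b c :: LF1 :: r => Some (mono [:: LF1; LT a b c] (cq (b - a)), r)
  | LT a b c :: LF2 :: r => Some (mono [:: LF2; LT a b c] (cq (c - b)), r)
  | _ => None end.
Definition rule_EF : rule := fun w =>
  match w with
  | LE1 :: LF1 :: r => Some (mono [:: LF1; LE1] cone ++ mono [:: LT 1 (-1) 0] ckinv
                             ++ mono [:: LT (-1) 1 0] (copp ckinv), r)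
  | LE2 :: LF2 :: r => Some (mono [:: LF2; LE2] cone ++ mono [:: LT 0 1 (-1)] ckinv
                             ++ mono [:: LT 0 (-1) 1] (copp ckinv), r)
  | LE1 :: LF2 :: r => Some (mono [:: LF2; LE1] cone, r)
  | LE2 :: LF1 :: r => Some (mono [:: LF1; LE2] cone, r)
  | _ => None end.
Definition rule_serre (x y : letter) : rule := fun w =>
  match w with
  | y' :: x' :: x'' :: r =>
    if [&& y' == y, x' == x & x'' == x] then
      Some (mono [:: x; y; x] cqint2 ++ mono [:: x; x; y] (copp cone), r)
    else if [&& y' == y, x' == y & x'' == x] then
      Some (mono [:: y; x; y] cqint2 ++ mono [:: x; y; y] (copp cone), r)
    else None
  | _ => None end.

Fixpoint first_rule (fs : seq rule) : rule := fun w =>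
  if fs is f :: fs' then if f w is Some x then Some x else first_rule fs' w else None.

Definition redex : rule :=
  first_rule [:: rule_E3; rule_F3; rule_TT; rule_T0; rule_ET; rule_TF; rule_EF;
                 rule_serre LE1 LE2; rule_serre LF1 LF2].

Fixpoint rewrite_word (w : word) : option ncpoly :=
  if w is x :: w' then
    if redex w is Some (p, r) then Some (pmulp p (mono r cone))
    else omap (pmulp (mono [:: x] cone)) (rewrite_word w')
  else None.

Definition step (p : ncpoly) : ncpoly :=
  pnorm (flatten [seq if rewrite_word t.1 is Some p' then pscale t.2 p' else [:: t] | t <- p]).

Definition normalize (n : nat) (p : ncpoly) : ncpoly := iter n step p.

Section Soundness.
Variables (K : fieldType) (qp : K -> K) (A : algType K) (g : UqGens A).
Hypothesis qp0 : qp 0 = 1.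
Hypothesis qpD : forall a b, qp (a + b) = qp a * qp b.
Hypothesis kappa_neq0 : kappa qp != 0.
Hypothesis HR : Uq_relations qp g.

Local Notation T := (Tq g).
Local Notation icoef := (icoef qp).

Definition iletter (x : letter) : A :=
  match x with
  | LE1 => E1 g | LE2 => E2 g | LE3 => E3 qp g
  | LF1 => F1 g | LF2 => F2 g | LF3 => F3 qp g
  | LT a b c => T a%:~R b%:~R c%:~R end.
Definition iword (w : word) : A := \prod_(x <- w) iletter x.
Definition ipoly (p : ncpoly) : A := \sum_(t <- p) icoef t.2 *: iword t.1.

Lemma iword_nil : iword [::] = 1. Proof. exact: big_nil. Qed.
Lemma iword_cons x w : iword (x :: w) = iletter x * iword w. Proof. exact: big_cons. Qed.
Lemma iword_cat u v : iword (u ++ v) = iword u * iword v. Proof. exact: big_cat. Qed.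

Lemma ipoly_nil : ipoly [::] = 0. Proof. exact: big_nil. Qed.
Lemma ipoly_cons t p : ipoly (t :: p) = icoef t.2 *: iword t.1 + ipoly p.
Proof. exact: big_cons. Qed.
Lemma ipoly_cat p1 p2 : ipoly (p1 ++ p2) = ipoly p1 + ipoly p2.
Proof. exact: big_cat. Qed.
Lemma ipoly_mono w c : ipoly (mono w c) = icoef c *: iword w.
Proof. exact: big_seq1. Qed.

Lemma ipoly_scale c p : ipoly (pscale c p) = icoef c *: ipoly p.
Proof.
rewrite /ipoly big_map scaler_sumr; apply: eq_bigr => t _.
by rewrite /= (icoef_mul qpD) scalerA.
Qed.

Lemma ipoly_mul p1 p2 : ipoly (pmulp p1 p2) = ipoly p1 * ipoly p2.
Proof.
rewrite /ipoly big_allpairs_dep mulr_suml; apply: eq_bigr => t1 _.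
rewrite mulr_sumr; apply: eq_bigr => t2 _ /=.
by rewrite iword_cat (icoef_mul qpD) -scalerAl -scalerAr scalerA.
Qed.

Lemma ipoly_pins t p : ipoly (pins t p) = ipoly (mono t.1 t.2) + ipoly p.
Proof.
rewrite ipoly_mono; elim: p => [|t' p IH] /=; first by rewrite ipoly_cons ipoly_nil addr0.
case: eqP => [e|_]; rewrite !ipoly_cons /=; last by rewrite IH addrCA.
by rewrite (icoef_add qp0 qpD kappa_neq0) scalerDl -e addrA.
Qed.

Lemma ipoly_norm p : ipoly (pnorm p) = ipoly p.
Proof.
rewrite /pnorm /ipoly big_filter big_map big_mkcond /=.
transitivity (ipoly (foldr pins [::] p)).
  apply: eq_bigr => t _; rewrite icoef_norm //; case: eqP => // c0.
  by rewrite /icoef -ilaur_norm c0 /ilaur big_nil mul0r scale0r.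
elim: p => [|t p IH] //=.
by rewrite ipoly_pins IH ipoly_mono /ipoly big_cons.
Qed.

Definition sound_rule (f : rule) :=
  forall w p r, f w = Some (p, r) -> iword w = ipoly p * iword r.

Ltac rule_simpl :=
  rewrite /mono ?ipoly_cat ?ipoly_cons ?ipoly_nil /= ?icoef_opp ?(icoef_one qp0) ?icoef_cq
          ?iword_cons ?iword_nil ?mulr1 ?scaleNr ?scale1r ?addr0 /=.

Lemma rule_E3_sound : sound_rule rule_E3.
Proof. by move=> [|[] w] // p r [<- <-]; rule_simpl. Qed.

Lemma rule_F3_sound : sound_rule rule_F3.
Proof. by move=> [|[] w] // p r [<- <-]; rule_simpl. Qed.

Lemma rule_TT_sound : sound_rule rule_TT.
Proof.
move=> [|x [|y w]] p r //; case: x => // a b c; case: y => // a' b' c' [<- <-].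
by rule_simpl; rewrite mulrA (TM HR) !intrD.
Qed.

Lemma rule_T0_sound : sound_rule rule_T0.
Proof.
move=> [|x w] p r //; case: x => // a b c /=.
case: ifP => // /and3P[/eqP-> /eqP-> /eqP->] [<- <-].
by rule_simpl; rewrite (T0 HR) mul1r.
Qed.

Lemma rule_ET_sound : sound_rule rule_ET.
Proof.
move=> [|x [|y w]] p r //; case: x => //; case: y => // a b c [<- <-];
  rule_simpl; rewrite mulrA -scalerAl intrB.
  by rewrite (commute_T HR (weight_E1 HR)) -scalerAl opprK addrC.
by rewrite (commute_T HR (weight_E2 HR)) -scalerAl opprK addrC.
Qed.

Lemma rule_TF_sound : sound_rule rule_TF.
Proof.
move=> [|x [|y w]] p r //; case: x => // a b c; case: y => // -[<- <-];
  rule_simpl; rewrite mulrA -scalerAl intrB.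
  by rewrite (T_commute HR (weight_F1 HR)) -scalerAl opprB.
by rewrite (T_commute HR (weight_F2 HR)) -scalerAl opprB.
Qed.

Lemma rule_EF_sound : sound_rule rule_EF.
Proof.
case: HR => _ _ _ [EF11 EF22 EF12 EF21] _.
move=> [|x [|y w]] p r //; case: x => //; case: y => // -[<- <-];
  rule_simpl; rewrite mulrA; congr (_ * _).
- by rewrite (icoef_kinv qp0) -scalerBr -[LHS](subrK (F1 g * E1 g)) EF11 addrC.
- by apply/eqP; rewrite -subr_eq0 EF12.
- by apply/eqP; rewrite -subr_eq0 EF21.
- by rewrite (icoef_kinv qp0) -scalerBr -[LHS](subrK (F2 g * E2 g)) EF22 addrC.
Qed.

Lemma solve_last (u v w : A) : u - v + w = 0 -> w = v - u.
Proof. by move/eqP; rewrite addrC addr_eq0 opprB => /eqP. Qed.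

Lemma solve_first (u v w : A) : u - v + w = 0 -> u = v - w.
Proof. by move/eqP; rewrite -addrA addr_eq0 opprD opprK => /eqP. Qed.

Lemma rule_serre_sound x y (X := iletter x) (Y := iletter y) :
  X * X * Y - qint2 qp *: (X * Y * X) + Y * X * X = 0 ->
  Y * Y * X - qint2 qp *: (Y * X * Y) + X * Y * Y = 0 ->
  sound_rule (rule_serre x y).
Proof.
move=> /solve_last sx /solve_first sy [|y' [|x' [|x'' w]]] p r //=.
case: ifP => [/and3P[/eqP-> /eqP-> /eqP->] [<- <-]|_].
  by rule_simpl; rewrite (icoef_qint2 qpD kappa_neq0) !mulrA sx mulrBl -scalerAl.
case: ifP => // /and3P[/eqP-> /eqP-> /eqP->] [<- <-].
by rule_simpl; rewrite (icoef_qint2 qpD kappa_neq0) !mulrA sy mulrBl -scalerAl.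
Qed.

Lemma first_rule_sound fs :
  foldr (fun f P => sound_rule f /\ P) True fs -> sound_rule (first_rule fs).
Proof.
elim: fs => [_ w p r //|f fs IH [sf sfs] w p r /=].
by case fw: (f w) => [[p' r']|]; [case=> <- <-; apply: sf | apply: IH].
Qed.

Lemma redex_sound : sound_rule redex.
Proof.
case: HR => _ _ _ _ [SE1 SE2 SF1 SF2].
apply: first_rule_sound; do !split.
- exact: rule_E3_sound.
- exact: rule_F3_sound.
- exact: rule_TT_sound.
- exact: rule_T0_sound.
- exact: rule_ET_sound.
- exact: rule_TF_sound.
- exact: rule_EF_sound.
- by apply: rule_serre_sound; [exact: SE1 | exact: SE2].
- by apply: rule_serre_sound; [exact: SF1 | exact: SF2].
Qed.

Lemma rewrite_word_sound w p : rewrite_word w = Some p -> ipoly p = iword w.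
Proof.
elim: w p => [|x w IH] p //=.
case rw: (redex (x :: w)) => [[p' r]|].
  by case=> <-; rewrite ipoly_mul ipoly_mono (icoef_one qp0) scale1r (redex_sound rw).
case rw': (rewrite_word w) => [p'|] //= [<-].
by rewrite ipoly_mul ipoly_mono (icoef_one qp0) scale1r (IH _ rw') -iword_cat.
Qed.

Lemma step_sound p : ipoly (step p) = ipoly p.
Proof.
rewrite /step ipoly_norm; elim: p => [|t p IH] //=.
rewrite ipoly_cat IH ipoly_cons; congr (_ + _).
case rw: (rewrite_word t.1) => [p'|]; last by rewrite ipoly_cons ipoly_nil addr0.
by rewrite ipoly_scale (rewrite_word_sound rw).
Qed.

Lemma normalize_sound n p : ipoly (normalize n p) = ipoly p.
Proof. by elim: n => [|n IH] //=; rewrite step_sound. Qed.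
End Soundness.

Inductive scalar :=
  SQ of int | SKappa | SNat of nat
| SAdd of scalar & scalar | SMul of scalar & scalar | SOpp of scalar | SExp of scalar & nat.

Inductive expr :=
  XL of letter | X0 | X1 | XAdd of expr & expr | XOpp of expr
| XMul of expr & expr | XScale of scalar & expr.

Fixpoint compile_scalar (s : scalar) : coef :=
  match s with
  | SQ e => cq e
  | SKappa => (0%N, [:: (1, 1); (-1, -1)])
  | SNat n => (0%N, [:: (0, n%:Z)])
  | SAdd s t => cadd (compile_scalar s) (compile_scalar t)
  | SMul s t => cmul (compile_scalar s) (compile_scalar t)
  | SOpp s => copp (compile_scalar s)
  | SExp s n => iter n (cmul (compile_scalar s)) cone
  end.

Fixpoint compile (e : expr) : ncpoly :=
  match e with
  | XL x => mono [:: x] cone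
  | X0 => [::]
  | X1 => mono [::] cone
  | XAdd e1 e2 => compile e1 ++ compile e2
  | XOpp e => pscale (copp cone) (compile e)
  | XMul e1 e2 => pmulp (compile e1) (compile e2)
  | XScale s e => pscale (compile_scalar s) (compile e)
  end.

Section Decide.
Variables (K : fieldType) (qp : K -> K) (A : algType K) (g : UqGens A).
Hypothesis qp0 : qp 0 = 1.
Hypothesis qpD : forall a b, qp (a + b) = qp a * qp b.
Hypothesis kappa_neq0 : kappa qp != 0.
Hypothesis HR : Uq_relations qp g.

Fixpoint iscalar (s : scalar) : K :=
  match s with
  | SQ e => qp e%:~R
  | SKappa => kappa qp
  | SNat n => n%:R
  | SAdd s t => iscalar s + iscalar t
  | SMul s t => iscalar s * iscalar t
  | SOpp s => - iscalar s
  | SExp s n => iscalar s ^+ n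
  end.

Fixpoint iexpr (e : expr) : A :=
  match e with
  | XL x => iletter qp g x
  | X0 => 0
  | X1 => 1
  | XAdd e1 e2 => iexpr e1 + iexpr e2
  | XOpp e => - iexpr e
  | XMul e1 e2 => iexpr e1 * iexpr e2
  | XScale s e => iscalar s *: iexpr e
  end.

Lemma compile_scalar_sound s : icoef qp (compile_scalar s) = iscalar s.
Proof.
elim: s => [e||n|s IHs t IHt|s IHs t IHt|s IHs|s IHs n] /=.
- exact: icoef_cq.
- by rewrite /icoef /ilaur !big_cons big_nil /kappa addr0 !mul1r mulN1r divr1.
- by rewrite /icoef /ilaur big_seq1 qp0 mulr1 divr1.
- by rewrite icoef_add // IHs IHt.
- by rewrite icoef_mul // IHs IHt.
- by rewrite icoef_opp IHs.
- elim: n => [|n IHn]; first exact: icoef_one.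
  by rewrite iterS icoef_mul // IHn IHs exprS.
Qed.

Lemma compile_sound e : ipoly qp g (compile e) = iexpr e.
Proof.
elim: e => [x| | |e1 IH1 e2 IH2|e IH|e1 IH1 e2 IH2|s e IH] /=.
- by rewrite ipoly_mono icoef_one // scale1r iword_cons iword_nil mulr1.
- exact: ipoly_nil.
- by rewrite ipoly_mono icoef_one // scale1r iword_nil.
- by rewrite ipoly_cat IH1 IH2.
- by rewrite ipoly_scale // icoef_opp icoef_one // scaleN1r IH.
- by rewrite ipoly_mul // IH1 IH2.
- by rewrite ipoly_scale // compile_scalar_sound IH.
Qed.

Lemma uq_identity n e1 e2 :
  normalize n (compile (XAdd e1 (XOpp e2))) = [::] -> iexpr e1 = iexpr e2.
Proof.
move=> nf0; apply/eqP; rewrite -subr_eq0.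
have := normalize_sound qp0 qpD kappa_neq0 HR n (compile (XAdd e1 (XOpp e2))).
by rewrite nf0 ipoly_nil compile_sound => /= <-.
Qed.
End Decide.

Ltac reify_int x :=
  lazymatch x with
  | 0%R => constr:(Posz 0)
  | 1%R => constr:(Posz 1)
  | (- ?y)%R => let r := reify_int y in constr:((- r)%R)
  | (?n%:R)%R => constr:(Posz n)
  end.

Ltac reify_scalar qp s :=
  lazymatch s with
  | qp ?x => let e := reify_int x in constr:(SQ e)
  | kappa qp => constr:(SKappa)
  | 0%R => constr:(SNat 0)
  | 1%R => constr:(SNat 1)
  | (?n%:R)%R => constr:(SNat n)
  | (?a + ?b)%R => let x := reify_scalar qp a in let y := reify_scalar qp b in constr:(SAdd x y)
  | (?a * ?b)%R => let x := reify_scalar qp a in let y := reify_scalar qp b in constr:(SMul x y)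
  | (- ?a)%R => let x := reify_scalar qp a in constr:(SOpp x)
  | (?a ^+ ?n)%R => let x := reify_scalar qp a in constr:(SExp x n)
  end.

Ltac reify_expr qp g t :=
  lazymatch t with
  | E1 g => constr:(XL LE1)
  | E2 g => constr:(XL LE2)
  | E3 qp g => constr:(XL LE3)
  | F1 g => constr:(XL LF1)
  | F2 g => constr:(XL LF2)
  | F3 qp g => constr:(XL LF3)
  | Tq g ?x ?y ?z =>
      let a := reify_int x in let b := reify_int y in let c := reify_int z in
      constr:(XL (LT a b c))
  | 0%R => constr:(X0)
  | 1%R => constr:(X1)
  | (?a + ?b)%R => let x := reify_expr qp g a in let y := reify_expr qp g b in constr:(XAdd x y)
  | (?a * ?b)%R => let x := reify_expr qp g a in let y := reify_expr qp g b in constr:(XMul x y)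
  | (- ?a)%R => let x := reify_expr qp g a in constr:(XOpp x)
  | (?s *: ?a)%R => let x := reify_scalar qp s in let y := reify_expr qp g a in constr:(XScale x y)
  end.

Ltac uq_ring qp g decide :=
  lazymatch goal with
  | |- ?l = ?r =>
    let e1 := reify_expr qp g l in let e2 := reify_expr qp g r in
    change (iexpr qp g e1 = iexpr qp g e2);
    apply: (@decide 100%N e1 e2); vm_compute; reflexivity
  end.

Ltac coefficientwise tac :=
  repeat lazymatch goal with
  | |- ps [::] = ps [::] => reflexivity
  | |- ps (_ :: _) = ps (_ :: _) => apply: ps_cons; [tac|]
  | |- ps [::] = ps (_ :: _) => apply: ps_nil_cons; [tac|]
  | |- ps (_ :: _) = ps [::] => apply: ps_cons_nil; [tac|]
  end.

(* 4. The commutation and cofactor identities *)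

Section Identities.
Variables (K : fieldType) (qp : K -> K) (A : algType K) (g : UqGens A).
Hypothesis qp0 : qp 0 = 1.
Hypothesis qpD : forall a b, qp (a + b) = qp a * qp b.
Hypothesis q2ne : qp 1 ^+ 2 != 1.
Hypothesis HR : Uq_relations qp g.

Let decide := uq_identity qp0 qpD (kappa_neq0 qp0 qpD q2ne) HR.

Local Notation up := (psubst (qp 2)).
Local Notation down := (psubst (qp (-2))).
Local Notation a := (N'11 g).

(* the quantum minor of the first two rows and columns *)
Definition qminor : series A :=
  psub (up a *s N'22 g) (pzeta *s (N'21 qp g *s N'12 qp g)).

(* numerators of the downshifted entries N''23, N''32 and of the correction
   term of N''33 (see down_N''23 etc. below) *)
Definition num23 : series A := psub (a *s N'23 qp g) (N'21 qp g *s N'13 qp g).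
Definition num32 : series A :=
  psub (a *s N'32 qp g) (down pzeta *s (N'31 qp g *s N'12 qp g)).
Definition num33 : series A := N'31 qp g *s N'13 qp g.

Ltac series_identity :=
  rewrite /qminor /num23 /num32 /num33 /pzeta /N'11 /N'22 /N'33 /N'12 /N'13 /N'23
          /N'21 /N'31 /N'32;
  rewrite ?(pC_ps, pX_ps, psub_ps, padd_ps, pmul_ps, psubst_ps) /=;
  coefficientwise ltac:(idtac; uq_ring qp g decide).

(* q^(-2 G1) E1 = q^-2 E1 q^(-2 G1), so E1 intertwines a(q^2 zeta) and a(zeta) *)
Lemma up_a_E1 : up a *s N'21 qp g = N'21 qp g *s a.
Proof. series_identity. Qed.

(* q^(-2 G1) E3 = q^-2 E3 q^(-2 G1) *)
Lemma a_E3 : a *s N'31 qp g = N'31 qp g *s down a.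
Proof. series_identity. Qed.

Lemma a_qminor : a *s qminor = qminor *s a.
Proof. series_identity. Qed.

Lemma qminor_num32 : qminor *s num32 = up num32 *s down qminor.
Proof. series_identity. Qed.

(* the cofactor expansion of the characteristic polynomial along the last
   row and column *)
Lemma cofactor_identity :
  down pzeta *s padd (qminor *s num33) (up num32 *s num23)
  = a *s psub (qminor *s down (N'33 g)) (charpoly qp g).
Proof.
have -> : charpoly qp g = ps [:: 1; - C1 qp g; - C2 qp g; - C3 g].
  by apply: series_ext => -[|[|[|[|n]]]] //; rewrite /ps /= nth_nil.
rewrite /C1 /C2 /C3; series_identity.
Qed.
End Identities.

(* 5. The quasideterminant computation *)

Section Quasideterminant.
Variables (K : fieldType) (qp : K -> K) (A : algType K) (g : UqGens A).
Hypothesis qp0 : qp 0 = 1.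
Hypothesis qpD : forall a b, qp (a + b) = qp a * qp b.
Hypothesis q2ne : qp 1 ^+ 2 != 1.
Hypothesis HR : Uq_relations qp g.

Local Notation up := (psubst (qp 2)).
Local Notation down := (psubst (qp (-2))).
Local Notation a := (N'11 g).
Local Notation P := (qminor qp g).

Lemma a0 : a 0%N = 1. Proof. by rewrite /N'11 /psub /= subr0. Qed.
Lemma down_a0 : down a 0%N = 1. Proof. by rewrite psubst0 a0. Qed.
Lemma up_a0 : up a 0%N = 1. Proof. by rewrite psubst0 a0. Qed.

Lemma qminor0 : P 0%N = 1.
Proof. by rewrite /qminor /psub !pmul0 psubst0 a0 /= mul0r subr0 /N'22 /psub /= subr0 mulr1. Qed.

Lemma N''22_0 : N''22 qp g 0%N = 1.
Proof. by rewrite /N''22 /psub pmul0 /= mul0r subr0 /N'22 /psub /= subr0. Qed.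

Lemma down_up (f : series A) : down (up f) = f.
Proof. by rewrite psubst_comp -qpD addNr qp0 psubst1. Qed.

Lemma qminorE : up a *s N''22 qp g = P.
Proof.
rewrite /N''22 pmulBr /qminor; congr psub.
rewrite pmulA -pzeta_central -pmulA; congr (pmul pzeta).
rewrite pmulA (up_a_E1 qp0 qpD q2ne HR) -pmulA [a *s (pinv a *s _)]pmulA.
by rewrite pinv_r ?a0 // pmul1l.
Qed.

Lemma down_N''22 : down (N''22 qp g) = pinv a *s down P.
Proof.
have -> : N''22 qp g = pinv (up a) *s P.
  by rewrite -qminorE pmulA pinv_l ?up_a0 // pmul1l.
by rewrite psubst_mul psubst_inv ?up_a0 // down_up.
Qed.

Lemma a_E1 : a *s N'21 qp g = N'21 qp g *s down a.
Proof. by have := congr1 down (up_a_E1 qp0 qpD q2ne HR); rewrite !psubst_mul down_up psubst_C. Qed.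

Lemma down_N''23 : down (N''23 qp g) = pinv a *s num23 qp g.
Proof.
rewrite /N''23 psubst_sub !psubst_mul psubst_inv ?a0 // !psubst_C.
rewrite pmulA (pinv_commute a0 down_a0 a_E1) -pmulA /num23 pmulBr.
by rewrite [pinv a *s (a *s _)]pmulA pinv_l ?a0 // pmul1l.
Qed.

Lemma down_N''32 : down (N''32 qp g) = pinv a *s num32 qp g.
Proof.
rewrite /N''32 psubst_sub !psubst_mul psubst_inv ?a0 // !psubst_C.
rewrite [_ *s (pinv _ *s _)]pmulA (pinv_commute a0 down_a0 (a_E3 qp0 qpD q2ne HR)).
rewrite -pmulA /num32 pmulBr [pinv a *s (a *s _)]pmulA pinv_l ?a0 // pmul1l.
by congr psub; rewrite [RHS]pmulA -psubst_zeta_central -pmulA.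
Qed.

Lemma down_N''33 :
  down (N''33 qp g) = psub (down (N'33 g)) (down pzeta *s (pinv a *s num33 qp g)).
Proof.
rewrite /N''33 psubst_sub !psubst_mul psubst_inv ?a0 // !psubst_C.
by rewrite [_ *s (pinv _ *s _)]pmulA (pinv_commute a0 down_a0 (a_E3 qp0 qpD q2ne HR)) -pmulA.
Qed.

Lemma down_N'''33 : down (N'''33 qp g) =
  psub (down (N'33 g)) (down pzeta *s (pinv a *s
    padd (num33 qp g) (num32 qp g *s (pinv (down P) *s num23 qp g)))).
Proof.
have down_inv : down (pinv (N''22 qp g)) = pinv (down P) *s a.
  rewrite psubst_inv ?N''22_0 // down_N''22 pinv_mul ?pinv0 ?psubst0 ?qminor0 //.
  by rewrite pinvK ?a0.
rewrite /N'''33 psubst_sub !psubst_mul down_N''33 down_N''32 down_inv down_N''23 psubBA.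
rewrite [pinv a *s padd _ _]pmulDr pmulDr; congr (psub _ (padd _ (pmul _ _))).
rewrite -pmulA; congr (pmul (pinv a) (pmul (num32 qp g) _)).
by rewrite -pmulA [a *s (pinv a *s _)]pmulA pinv_r ?a0 // pmul1l.
Qed.

Lemma qminor_N'''33 : P *s down (N'''33 qp g) = charpoly qp g.
Proof.
have P_inv_a : P *s pinv a = pinv a *s P.
  exact: (pinv_commute a0 a0 (a_qminor qp0 qpD q2ne HR)).
rewrite down_N'''33 pmulBr [P *s (down pzeta *s _)]pmulA -psubst_zeta_central -pmulA.
rewrite [P *s (pinv a *s _)]pmulA P_inv_a -pmulA pmulDr.
rewrite [P *s (num32 qp g *s _)]pmulA (qminor_num32 qp0 qpD q2ne HR) -pmulA.
rewrite [down P *s (pinv _ *s _)]pmulA pinv_r ?psubst0 ?qminor0 // pmul1l.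
rewrite [down pzeta *s _]pmulA psubst_zeta_central -pmulA.
rewrite (cofactor_identity qp0 qpD q2ne HR) pmulA pinv_l ?a0 // pmul1l.
exact: psubKr.
Qed.
End Quasideterminant.

Theorem mainTheorem4 (K : fieldType) (qp : K -> K) (A : algType K)
  (g : UqGens A) :
  qp 0 = 1 ->
  (forall a b : K, qp (a + b) = qp a * qp b) ->
  qp 1 ^+ 2 != 1 ->
  Uq_relations qp g ->
  charpoly qp g =
  pmul (pmul (psubst (qp 2) (N'11 g)) (N''22 qp g))
       (psubst (qp (-2)) (N'''33 qp g)).
Proof.
move=> qp0 qpD q2ne HR.
by rewrite (qminorE qp0 qpD q2ne HR) (qminor_N'''33 qp0 qpD q2ne HR).
Qed.
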